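(* Let $G$ be finite and $z\in\mathbb C\setminus\{0\}$. If $\mu\in\mathrm{FA}(P)$ satisfies $\mathcal T'\mu=z\mu$, then the function $f_\mu:E\to\mathbb C$, $f_\mu(e)=\mu(\bar e)$, satisfies $Sf_\mu=zf_\mu$. Conversely, if $f\in\mathrm{Map}(E)$ satisfies $Sf=zf$, then $\mu_f(e_1,\dots,e_n):=z^{1-n}f(\overline{e_n})$ defines an element $\mu_f\in\mathrm{FA}(P)$ with $\mathcal T'\mu_f=z\mu_f$. The maps $\mu\mapsto f_\mu$ and $f\mapsto\mu_f$ are mutually inverse linear isomorphisms between $\{\mu\in\mathrm{FA}(P):\mathcal T'\mu=z\mu\}$ and $\{f\in\mathrm{Map}(E):Sf=zf\}$.
   Context: $G$ is a finite connected graph (no loops, no multiple edges, every vertex of degree $\ge2$); $E$ oriented edges with $\iota,\tau$ and opposite $\bar e$; turn $e\rightsquigarrow e'$ iff $\tau(e)=\iota(e')$, $e'\ne\bar e$. $P$ = infinite paths $(e_1,e_2,\dots)$ with $e_i\rightsquigarrow e_{i+1}$; $(\mathcal Tf)(e_1,\dots)=\sum_{e_0\rightsquigarrow e_1}f(e_0,e_1,\dots)$. Postal codes: finite paths $c=(c_1,\dots,c_m)$, $m\ge1$, with $c_i\rightsquigarrow c_{i+1}$; $\mathcal C_m$, $\mathcal C=\bigcup\mathcal C_m$; district $P_c$ = paths beginning with $c$; $\mathbf 1_c$ its indicator. $D_\infty$ = functions on $P$ depending only on finitely many initial edges. $\mathrm{FA}(P)=\{\mu:\mathcal C\to\mathbb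 C:\mu(c)=\sum_{e:c_m\rightsquigarrow e}\mu(c,e)\ \forall c\}$, where $(c,e)$ is the one-edge extension. Pairing: for $f\in D_m$, $\langle f,\mu\rangle=\sum_{c\in\mathcal C_m}f(c)\mu(c)$. Dual transfer operator $\mathcal T':\mathrm{FA}(P)\to\mathrm{FA}(P)$, $(\mathcal T'\mu)(c):=\langle\mathcal T\mathbf 1_c,\mu\rangle$; equivalently $\langle\mathcal Tf,\mu\rangle=\langle f,\mathcal T'\mu\rangle$ for $f\in D_\infty$. $(Sf)(e)=\sum_{e'\rightsquigarrow e}f(e')$. *)

From mathcomp Require Import all_boot all_algebra.
From mathcomp.real_closed Require Import complex.
From mathcomp Require Import Rstruct.
Set Implicit Arguments. Unset Strict Implicit. Unset Printing Implicit Defensive.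
Import GRing.Theory.
Local Open Scope ring_scope.

Definition CC : numClosedFieldType := (Rdefinitions.R)[i].

Record sgraph := SGraph {
  vert : finType;
  adj : rel vert;
  adj_sym : symmetric adj;
  adj_irr : irreflexive adj }.

Definition sg_connected (G : sgraph) : Prop := forall u v : vert G, connect (@adj G) u v.
Definition sg_mindeg2 (G : sgraph) : Prop := forall v : vert G, (2 <= #|[set w | @adj G v w]|)%N.

Definition oedge (G : sgraph) := {p : vert G * vert G | @adj G p.1 p.2}.
Definition iota_e (G : sgraph) (e : oedge G) : vert G := (val e).1.
Definition tau_e (G : sgraph) (e : oedge G) : vert G := (val e).2.

Lemma rev_edge_proof (G : sgraph) (e : oedge G) : @adj G (val e).2 (val e).1.
Proof. rewrite adj_sym; exact: (valP e). Qed.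

Definition bar (G : sgraph) (e : oedge G) : oedge G :=
  exist _ ((val e).2, (val e).1) (rev_edge_proof e).

Definition turn (G : sgraph) (e e' : oedge G) : bool :=
  (tau_e e == iota_e e') && (e' != bar e).

Definition is_code (G : sgraph) (c : seq (oedge G)) : bool :=
  if c is x :: s then path (@turn G) x s else false.

(* infinite paths: sequences nat -> E with p i ~> p (i+1).  Functions on P are
   represented as functions on nat -> E; only their values on P are ever used. *)
Definition is_ipath (G : sgraph) (p : nat -> oedge G) : Prop :=
  forall i, turn (p i) (p i.+1).

Definition prefix (G : sgraph) (p : nat -> oedge G) (m : nat) : seq (oedge G) :=
  mkseq p m.

Definition ind (G : sgraph) (c : seq (oedge G)) (p : nat -> oedge G) : CC :=
  if prefix p (size c) == c then 1 else 0.

Definition scons (G : sgraph) (e0 : oedge G) (p : nat -> oedge G) : nat -> oedge G :=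
  fun i => if i is j.+1 then p j else e0.

Definition transfer (G : sgraph) (f : (nat -> oedge G) -> CC) (p : nat -> oedge G) : CC :=
  \sum_(e0 : oedge G | turn e0 (p 0%N)) f (scons e0 p).

(* a canonical continuation of a code to an infinite path (one that is a genuine
   infinite path when every vertex has degree >= 2): after the code, repeatedly
   take some edge e' with e ~> e'. *)
Definition next_edge (G : sgraph) (e : oedge G) : oedge G :=
  odflt e [pick e' | turn e e'].

Definition ext (G : sgraph) (x : oedge G) (s : seq (oedge G)) : nat -> oedge G :=
  fun i => if (i < size (x :: s))%N then nth x (x :: s) i
           else iter (i - size s) (@next_edge G) (last x s).

(* finitely additive "measures": mu : C -> CC, represented as functions on
   seq E whose values off postal codes are irrelevant. *)
Definition isFA (G : sgraph) (mu : seq (oedge G) -> CC) : Prop :=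
  forall (x : oedge G) (s : seq (oedge G)), is_code (x :: s) ->
    mu (x :: s) = \sum_(e : oedge G | turn (last x s) e) mu (rcons (x :: s) e).

(* pairing <f, mu> for f in D_m: sum over postal codes of length m of
   f(c) mu(c), where f(c) is the value of f on (an) infinite path beginning with c *)
Definition pairing (G : sgraph) (m : nat) (f : (nat -> oedge G) -> CC)
    (mu : seq (oedge G) -> CC) : CC :=
  \sum_(c : m.-tuple (oedge G) | is_code c)
     (if tval c is x :: s then f (ext x s) else 0) * mu c.

(* dual transfer operator (T' mu)(c) := <T 1_c, mu>; T 1_c lies in D_m, m = |c| *)
Definition dual_transfer (G : sgraph) (mu : seq (oedge G) -> CC)
    (c : seq (oedge G)) : CC :=
  pairing (size c) (transfer (ind c)) mu.

Definition Sop (G : sgraph) (f : oedge G -> CC) (e : oedge G) : CC :=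
  \sum_(e' : oedge G | turn e' e) f e'.

Definition f_of (G : sgraph) (mu : seq (oedge G) -> CC) (e : oedge G) : CC :=
  mu [:: bar e].

Definition mu_of (G : sgraph) (z : CC) (f : oedge G -> CC) (c : seq (oedge G)) : CC :=
  if c is x :: s then z ^- size s * f (bar (last x s)) else 0.

From Pilot Require Import Defs.
From mathcomp Require Import all_boot all_algebra.
Import GRing.Theory.
Local Open Scope ring_scope.

(* The whole theorem rests on one computation, the "shift formula" for the dual
   transfer operator: for a postal code c = (c_1, c_2, ..., c_m),
       (T' mu)(c_1, ..., c_m) = sum_{e : c_m ~> e} mu(c_2, ..., c_m, e),
   because T 1_c is the indicator of the paths (c_2, ..., c_m, ...) preceded by
   an admissible turn into c_2.  Together with finite additivity this says that
   an eigenmeasure satisfies z mu(c_1, ..., c_m) = mu(c_2, ..., c_m), hence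
   mu(e_1, ..., e_n) = z^(1-n) mu(e_n): it is determined by its values on
   single edges.  Reversing edges turns the predecessor sum S into a successor
   sum, so the value on one-edge codes, read through e |-> mu(bar e), is an
   eigenfunction of S, and conversely. *)

Lemma mulr_invexprS {F : fieldType} {z : F} (hz : z != 0) (n : nat) :
  z * z ^- n.+1 = z ^- n.
Proof. by rewrite exprS invfM mulrA mulfV // mul1r. Qed.

Section EdgeReversal.
Variable G : sgraph.
Implicit Types e d x : oedge G.

Lemma bar_involutive : involutive (@bar G).
Proof. by move=> e; apply: val_inj; case: e => [[a b] h]. Qed.

Lemma bar_inj : injective (@bar G).
Proof. exact: inv_inj bar_involutive. Qed.

Lemma turn_bar d e : turn d e = turn (bar e) (bar d).
Proof.
rewrite /turn /tau_e /iota_e /= eq_sym bar_involutive.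
by congr andb; rewrite eq_sym.
Qed.

Lemma Sop_successors (f : oedge G -> CC) e :
  Sop f e = \sum_(d | turn (bar e) d) f (bar d).
Proof.
rewrite /Sop (reindex_inj bar_inj); apply: eq_bigl => d.
by rewrite turn_bar bar_involutive.
Qed.

End EdgeReversal.

Section ShiftFormula.
Variable G : sgraph.
Implicit Types e x : oedge G.

Lemma prefix_ext x s : rcons (Defs.prefix (ext x s) (size s)) (last x s) = x :: s.
Proof.
have -> : last x s = ext x s (size s).
  by rewrite /ext /= ltnSn -[size s]/((size (x :: s)).-1) nth_last.
rewrite /Defs.prefix -mkseqS -[(size s).+1]/(size (x :: s)).
rewrite -[RHS](mkseq_nth x) /mkseq; apply/eq_in_map => i.
by rewrite mem_iota add0n => /andP [_ hi]; rewrite /ext hi.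
Qed.

Lemma prefix_scons e0 (p : nat -> oedge G) n :
  Defs.prefix (scons e0 p) n.+1 = e0 :: Defs.prefix p n.
Proof.
rewrite /Defs.prefix /mkseq /= -[1%N]/(1 + 0)%N iotaDl -map_comp.
by congr cons; apply: eq_map.
Qed.

Lemma transfer_ind_ext c1 t x s : size s = size t ->
  transfer (ind (c1 :: t)) (ext x s) =
  if turn c1 x && (x :: s == rcons t (last x s)) then 1 else 0.
Proof.
move=> hs; rewrite /transfer [ext x s 0]/=.
have ind_scons e0 : ind (c1 :: t) (scons e0 (ext x s)) =
    if (e0 == c1) && (x :: s == rcons t (last x s)) then 1 else 0.
  rewrite /ind /= prefix_scons eqseq_cons.
  by rewrite -(prefix_ext x s) eqseq_rcons eqxx andbT hs.
under eq_bigr => e0 _ do rewrite ind_scons.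
case hc1: (turn c1 x).
  rewrite (bigD1 c1) // eqxx andTb big1; first exact: addr0.
  by move=> e0 /andP [_ /negbTE ->].
by rewrite big1 // => e0 he0; case: eqP => //= E; rewrite E hc1 in he0.
Qed.

Lemma code_extension c1 t e : is_code (c1 :: t) ->
  is_code (rcons t e) && turn c1 (head c1 (rcons t e)) = turn (last c1 t) e.
Proof.
case: t => [|y t] //=.
by case/andP=> h1 h2; rewrite rcons_path h1 h2 andbT.
Qed.

Lemma dual_transfer_shift (mu : seq (oedge G) -> CC) c1 t : is_code (c1 :: t) ->
  dual_transfer mu (c1 :: t) = \sum_(e | turn (last c1 t) e) mu (rcons t e).
Proof.
move=> hc; rewrite /dual_transfer /pairing; set m := size (c1 :: t).
pose extends (d : m.-tuple (oedge G)) :=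
  (tval d == rcons t (last c1 d)) && turn c1 (head c1 d).
have summand (d : m.-tuple (oedge G)) :
    (if tval d is x :: s then transfer (ind (c1 :: t)) (ext x s) else 0) * mu d
    = if extends d then mu d else 0.
  case: d => [[|x s] //= hd]; rewrite transfer_ind_ext; last first.
    by move: hd; rewrite /m /= eqSS => /eqP.
  by rewrite /extends andbC; case: ifP; rewrite ?mul1r ?mul0r.
rewrite (eq_bigr _ (fun d _ => summand d)) -big_mkcondr.
pose extend e : m.-tuple (oedge G) := insubd (in_tuple (c1 :: t)) (rcons t e).
have extendK e : tval (extend e) = rcons t e.
  by rewrite insubdK // -topredE /= size_rcons.
rewrite (reindex_onto extend (fun d => last c1 (tval d))); last first.
  move=> d /andP [_ /andP [/eqP hd _]]; apply: val_inj.
  exact: etrans (extendK _) (esym hd).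
rewrite (eq_bigr (fun e => mu (rcons t e))) => [|e _]; last by rewrite extendK.
apply: eq_bigl => e; rewrite /extends extendK last_rcons !eqxx andbT.
by rewrite -(code_extension _ _ e hc) andbC.
Qed.

End ShiftFormula.

Section Eigenmeasures.
Variables (G : sgraph) (z : CC).
Hypothesis z_neq0 : z != 0.
Implicit Types (e x : oedge G) (f : oedge G -> CC) (mu : seq (oedge G) -> CC).

Definition eigenmeasure mu :=
  forall c, is_code c -> dual_transfer mu c = z * mu c.

Definition eigenfunction f := forall e, Sop f e = z * f e.

Lemma mu_of_cons f x s : mu_of z f (x :: s) = z ^- size s * f (bar (last x s)).
Proof. by []. Qed.

Lemma mu_of_single f e : mu_of z f [:: e] = f (bar e).
Proof. by rewrite mu_of_cons expr0 invr1 mul1r. Qed.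

Lemma Sop_f_of mu e : Sop (f_of mu) e = dual_transfer mu [:: bar e].
Proof.
rewrite dual_transfer_shift // Sop_successors.
by apply: eq_bigr => d _; rewrite /f_of bar_involutive.
Qed.

Lemma eigenmeasure_f_of mu : eigenmeasure mu -> eigenfunction (f_of mu).
Proof. by move=> hT e; rewrite Sop_f_of hT. Qed.

Lemma eigenmeasure_last mu : isFA mu -> eigenmeasure mu ->
  forall x s, is_code (x :: s) -> mu (x :: s) = z ^- size s * mu [:: last x s].
Proof.
move=> hFA hT x s; elim: s x => [|y s IH] x hc; first by rewrite expr0 invr1 mul1r.
have hc' : is_code (y :: s) by case/andP: hc.
have shift : z * mu (x :: y :: s) = mu (y :: s).
  by rewrite -hT // dual_transfer_shift // (hFA y s hc').
apply: (mulfI z_neq0); rewrite shift IH // mulrA.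
by rewrite -[size (y :: s)]/(size s).+1 (mulr_invexprS z_neq0).
Qed.

(* mu_f is finitely additive: the sum over one-edge extensions is an S-sum. *)
Lemma isFA_mu_of f : eigenfunction f -> isFA (mu_of z f).
Proof.
move=> hS x s _.
rewrite (eq_bigr (fun e => z ^- (size s).+1 * f (bar e))) => [|e _]; last first.
  by rewrite rcons_cons mu_of_cons size_rcons last_rcons.
rewrite -mulr_sumr.
have -> : \sum_(e | turn (last x s) e) f (bar e) = Sop f (bar (last x s)).
  by rewrite Sop_successors bar_involutive.
by rewrite hS mulrA [_ * z]mulrC (mulr_invexprS z_neq0).
Qed.

(* mu_f is a T'-eigenmeasure: the shift formula reduces it to additivity of
   mu_f, except on one-edge codes where it is the eigen-equation of f. *)
Lemma eigenmeasure_mu_of f : eigenfunction f -> eigenmeasure (mu_of z f).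
Proof.
move=> hS [|c1 t] // hc; rewrite dual_transfer_shift //.
case: t hc => [|y t] hc.
  rewrite mu_of_single -hS Sop_successors bar_involutive.
  by apply: eq_bigr => e _; rewrite mu_of_single.
have hc' : is_code (y :: t) by case/andP: hc.
have -> : last c1 (y :: t) = last y t by [].
rewrite -(isFA_mu_of _ hS _ _ hc') !mu_of_cons mulrA.
by rewrite -[size (y :: t)]/(size t).+1 (mulr_invexprS z_neq0).
Qed.

Lemma mu_of_f_of mu : isFA mu -> eigenmeasure mu ->
  forall c, is_code c -> mu_of z (f_of mu) c = mu c.
Proof.
move=> hFA hT [|x s] // hc.
by rewrite mu_of_cons /f_of bar_involutive (eigenmeasure_last _ hFA hT _ _ hc).
Qed.

Lemma f_of_mu_of f e : f_of (mu_of z f) e = f e.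
Proof. by rewrite /f_of mu_of_single bar_involutive. Qed.

Lemma mu_of_linear (a : CC) f1 f2 c :
  mu_of z (fun e => a * f1 e + f2 e) c = a * mu_of z f1 c + mu_of z f2 c.
Proof.
case: c => [|x s]; first by rewrite /mu_of mulr0 addr0.
by rewrite !mu_of_cons mulrDr mulrCA.
Qed.

End Eigenmeasures.

Theorem mainTheorem13 (G : sgraph) (Hconn : sg_connected G) (Hdeg : sg_mindeg2 G)
    (z : CC) (Hz : z != 0) :
  (* mu eigen for T' ==> f_mu eigen for S *)
  (forall mu : seq (oedge G) -> CC, isFA mu ->
     (forall c, is_code c -> dual_transfer mu c = z * mu c) ->
     forall e, Sop (f_of mu) e = z * f_of mu e) /\
  (* f eigen for S ==> mu_f in FA(P) and eigen for T' *)
  (forall f : oedge G -> CC, (forall e, Sop f e = z * f e) ->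
     isFA (mu_of z f) /\
     (forall c, is_code c -> dual_transfer (mu_of z f) c = z * mu_of z f c)) /\
  (* mutually inverse *)
  (forall mu : seq (oedge G) -> CC, isFA mu ->
     (forall c, is_code c -> dual_transfer mu c = z * mu c) ->
     forall c, is_code c -> mu_of z (f_of mu) c = mu c) /\
  (forall f : oedge G -> CC, (forall e, Sop f e = z * f e) ->
     forall e, f_of (mu_of z f) e = f e) /\
  (* linearity *)
  (forall (a : CC) (mu1 mu2 : seq (oedge G) -> CC) e,
     f_of (fun c => a * mu1 c + mu2 c) e = a * f_of mu1 e + f_of mu2 e) /\
  (forall (a : CC) (f1 f2 : oedge G -> CC) c,
     mu_of z (fun e => a * f1 e + f2 e) c = a * mu_of z f1 c + mu_of z f2 c).
Proof.
split; first by move=> mu _; exact: eigenmeasure_f_of.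
split.
  move=> f hS; split; first exact: (@isFA_mu_of G z Hz).
  exact: (@eigenmeasure_mu_of G z Hz).
split; first exact: (@mu_of_f_of G z Hz).
split; first by move=> f _ e; exact: f_of_mu_of.
split; first by [].
exact: (@mu_of_linear G z).
Qed.
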